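(* Let $A$ be a bounded distributive lattice, $X$ its Priestley space, and $\kappa$ a regular cardinal. (1) $A$ is a complete lattice that is a $\kappa$-frame if and only if $X$ is extremally order disconnected and ${\sf cl}(U)$ is a clopen upset for each $\kappa$-clopen upset $U$. (2) $A$ is a $\kappa$-complete Heyting lattice if and only if $X$ is an Esakia space and ${\sf cl}(U)$ is a clopen upset for each $\kappa$-clopen upset $U$. (3) Every relative annihilator of $A$ belongs to $\mathcal{BL}_\kappa A$ if and only if $X\setminus{\downarrow}U\in{\sf BL}_\kappa(X)$ for each clopen $U\subseteq X$. (4) Every relative annihilator of $A$ is a normal ideal belonging to $\mathcal{BL}_\kappa A$ if and only if $X\setminus{\downarrow}U\in{\sf DM}(X)\cap{\sf BL}_\kappa(X)$ for each clopen $U\subseteq X$.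
   Context: A $\kappa$-frame is a lattice in which all joins of fewer than $\kappa$ elements exist and are distributive ($a\wedge\bigvee S=\bigvee\{a\wedge s\}$); $\kappa$-complete means such joins exist; a Heyting lattice has $\to$ with $a\wedge b\le c\iff a\le b\to c$. A relative annihilator is $\langle a,b\rangle=\{x:a\wedge x\le b\}$; a normal ideal is a downset $N=N^{u\ell}$. $\mathcal{BL} A$ is the frame of D-ideals (downsets containing $\bigvee S$ for each subset $S$ with distributive join), with $A$ identified with its principal downsets, and $\mathcal{BL}_\kappa A$ is the sub-$\kappa$-frame of $\mathcal{BL} A$ generated by $A$. The Priestley space $X$ of $A$ is the set of prime filters ordered by inclusion, with topology generated by $\{\mathfrak s(a)\setminus\mathfrak s(b)\}$, $\mathfrak s(a)=\{x:a\in x\}$. ${\sf cl}$ is topological closure, ${\sf cl_2}(S)={\uparrow}{\sf cl}(S)$, ${\sf int_1}(S)=X\setminus{\downarrow}(X\setminus{\sf int}(S))$. A DM-set is an open upset $U$ with ${\sf int_1\,cl_2}(U)=U$; ${\sf DM}(X)$ is the set of DM-sets. A $\kappa$-clopen upset is a union of fewer than $\kappa$ clopen upsets; ${\sf BL}_\kappa(X)=\{{\sf int_1\,cl}(V): V\text{ a }\kappa\text{-clopen upset}\}$. $X$ is extremally order disconnected if ${\sf cl_2}(U)$ is clopen for every open upset $U$; $X$ is an Esakia space if ${\downarrow}U$ is clopen for every clopen $U\subseteq X$. *)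

From HB Require Import structures.
From mathcomp Require Import all_boot all_order.
Set Implicit Arguments. Unset Strict Implicit. Unset Printing Implicit Defensive.
Import Order.Theory.
Local Open Scope order_scope.

(* ---------- cardinals, represented by a type K of cardinality kappa ---------- *)

Definition lt_card (T : Type) (S : T -> Prop) (K : Type) : Prop :=
  (exists f : T -> K, forall x y, S x -> S y -> f x = f y -> x = y) /\
  ~ (exists g : K -> T, (forall k l, g k = g l -> k = l) /\ (forall k, S (g k))).

Definition bigcupP (T : Type) (F : (T -> Prop) -> Prop) : T -> Prop :=
  fun x => exists U, F U /\ U x.

Definition regular_card (K : Type) : Prop :=
  (exists f : nat -> K, forall m n, f m = f n -> m = n) /\
  forall (T : Type) (F : (T -> Prop) -> Prop),
    lt_card F K -> (forall S, F S -> lt_card S K) -> lt_card (bigcupP F) K.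

Section Lattice.
Variables (d : Order.disp_t) (A : tbDistrLatticeType d) (K : Type).

Definition is_join (S : A -> Prop) (a : A) : Prop :=
  (forall s, S s -> s <= a) /\ (forall b, (forall s, S s -> s <= b) -> a <= b).

Definition has_join (S : A -> Prop) : Prop := exists a, is_join S a.

Definition dist_join_at (S : A -> Prop) (a : A) : Prop :=
  is_join S a /\
  forall b, is_join (fun c => exists s, S s /\ c = b `&` s) (b `&` a).

Definition complete_lattice : Prop := forall S : A -> Prop, has_join S.

Definition kappa_complete : Prop :=
  forall S : A -> Prop, lt_card S K -> has_join S.

Definition kappa_frame : Prop :=
  forall S : A -> Prop, lt_card S K -> exists a, dist_join_at S a.

Definition heyting_lattice : Prop :=
  forall b c : A, exists i : A, forall a : A, (a `&` b <= c) <-> (a <= i).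

Definition rel_ann (a b : A) : A -> Prop := fun x => a `&` x <= b.

Definition downset (S : A -> Prop) : Prop := forall x y, y <= x -> S x -> S y.

Definition upper_bounds (S : A -> Prop) : A -> Prop :=
  fun u => forall s, S s -> s <= u.
Definition lower_bounds (S : A -> Prop) : A -> Prop :=
  fun l => forall s, S s -> l <= s.

Definition normal_ideal (N : A -> Prop) : Prop :=
  downset N /\ N = lower_bounds (upper_bounds N).

Definition D_ideal (D : A -> Prop) : Prop :=
  downset D /\
  forall (S : A -> Prop) (a : A), (forall s, S s -> D s) -> dist_join_at S a -> D a.

Definition principal (a : A) : A -> Prop := fun x => x <= a.

Definition BL_join (F : (A -> Prop) -> Prop) : A -> Prop :=
  fun x => forall D, D_ideal D -> (forall I, F I -> forall y, I y -> D y) -> D x.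

Definition BL_meet (D E : A -> Prop) : A -> Prop := fun x => D x /\ E x.

Definition sub_kframe_containing_A (G : (A -> Prop) -> Prop) : Prop :=
  (forall D, G D -> D_ideal D) /\
  (forall a, G (principal a)) /\
  (forall D E, G D -> G E -> G (BL_meet D E)) /\
  (forall F, (forall D, F D -> G D) -> lt_card F K -> G (BL_join F)).

Definition BLk (D : A -> Prop) : Prop :=
  forall G, sub_kframe_containing_A G -> G D.

Definition prime_filter (x : A -> Prop) : Prop :=
  x \top /\
  (forall a b, a <= b -> x a -> x b) /\
  (forall a b, x a -> x b -> x (a `&` b)) /\
  ~ x \bot /\
  (forall a b, x (a `|` b) -> x a \/ x b).

Definition pspace : Type := {x : A -> Prop | prime_filter x}.

Definition pf_le (x y : pspace) : Prop := forall a, proj1_sig x a -> proj1_sig y a.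

Definition sset (a : A) : pspace -> Prop := fun x => proj1_sig x a.

Definition basic (a b : A) : pspace -> Prop := fun x => sset a x /\ ~ sset b x.

Definition complP (S : pspace -> Prop) : pspace -> Prop := fun x => ~ S x.

Definition is_open (U : pspace -> Prop) : Prop :=
  forall x, U x -> exists a b, basic a b x /\ forall y, basic a b y -> U y.
Definition is_closed (S : pspace -> Prop) : Prop := is_open (complP S).
Definition clopen (U : pspace -> Prop) : Prop := is_open U /\ is_closed U.

Definition cl (S : pspace -> Prop) : pspace -> Prop :=
  fun x => forall a b, basic a b x -> exists y, S y /\ basic a b y.
Definition int (S : pspace -> Prop) : pspace -> Prop :=
  fun x => exists a b, basic a b x /\ forall y, basic a b y -> S y.

Definition upsetX (U : pspace -> Prop) : Prop := forall x y, pf_le x y -> U x -> U y.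
Definition up (S : pspace -> Prop) : pspace -> Prop :=
  fun y => exists x, S x /\ pf_le x y.
Definition down (S : pspace -> Prop) : pspace -> Prop :=
  fun y => exists x, S x /\ pf_le y x.

Definition cl2 (S : pspace -> Prop) : pspace -> Prop := up (cl S).
Definition int1 (S : pspace -> Prop) : pspace -> Prop :=
  complP (down (complP (int S))).

Definition DM_set (U : pspace -> Prop) : Prop :=
  is_open U /\ upsetX U /\ int1 (cl2 U) = U.

Definition kclopen_upset (V : pspace -> Prop) : Prop :=
  exists F : (pspace -> Prop) -> Prop,
    lt_card F K /\ (forall U, F U -> clopen U /\ upsetX U) /\ V = bigcupP F.

Definition BLkX (W : pspace -> Prop) : Prop :=
  exists V, kclopen_upset V /\ W = int1 (cl V).

Definition extremally_order_disconnected : Prop :=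
  forall U, is_open U -> upsetX U -> clopen (cl2 U).

Definition esakia_space : Prop :=
  forall U, clopen U -> clopen (down U).

End Lattice.

(* Everything is read off Priestley duality. The prime filter theorem gives
   a <= b iff s(a) is included in s(b), and compactness makes the clopen upsets
   exactly the sets s(a). A family S has the distributive join a iff the closure
   of the union of the s(s), s in S, is s(a); this turns joins of fewer than
   kappa elements, arbitrary joins and Heyting implications into the
   topological conditions of (1) and (2), with s(b -> c) = X \ down(s(b) \ s(c)).
   A D-ideal is determined by an open upset W, as {a | s(a) is included in W};
   the D-ideal generated by S corresponds to int1 cl (union of the s(s)), and
   normal ideals correspond to DM-sets. For regular kappa the D-ideals generated
   by fewer than kappa elements form a sub-kappa-frame, hence are exactly
   BL_kappa A. The relative annihilator <a, b> corresponds to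
   X \ down(s(a) \ s(b)); a clopen U is a finite union of such differences, so
   X \ down U corresponds to a finite meet of relative annihilators.
   The prime filter theorem and compactness both come from one use of Zorn's
   lemma: a maximal consistent set of literals "a in P", "a not in P". *)

From Pilot Require Import Defs.
From mathcomp Require Import all_boot all_order.
From mathcomp Require Import boolp.
From mathcomp Require classical_sets.

Set Implicit Arguments. Unset Strict Implicit. Unset Printing Implicit Defensive.
Import Order.Theory.
Local Open Scope order_scope.

Local Notation meets p := (\meet_(i <- p) i).
Local Notation joins p := (\join_(i <- p) i).

Lemma chain_finite_bound (U : eqType) (F : (U -> Prop) -> Prop) (s : seq U) :
  classical_sets.total_on F classical_sets.subset ->
  (forall u, u \in s -> exists2 Z, F Z & Z u) ->
  s = [::] \/ exists2 Z, F Z & forall u, u \in s -> Z u.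
Proof.
move=> Ftot; elim: s => [|u s IH] s_cov; first by left.
right; have [Z FZ Zu] := s_cov u (mem_head u s).
have [->|[Z' FZ' sZ']] : s = [::] \/ exists2 Z, F Z & forall u, u \in s -> Z u.
- by apply: IH => v vs; apply: s_cov; rewrite inE vs orbT.
- by exists Z => // v; rewrite inE => /eqP->.
have [ZZ'|Z'Z] := Ftot Z Z' FZ FZ'.
  by exists Z' => // v; rewrite inE => /predU1P[->|/sZ']; [apply: ZZ'|].
by exists Z => // v; rewrite inE => /predU1P[->|/sZ'/Z'Z].
Qed.

Lemma forall_in_seq1 (T : eqType) (a : T) (Q : T -> Prop) :
  Q a -> forall c, c \in [:: a] -> Q c.
Proof. by move=> Qa c /[!inE] /eqP->. Qed.

Section TotalExtension.
Variables (T : eqType) (good : seq T -> seq T -> Prop).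
Hypothesis good_sub : forall p n p' n',
  good p n -> {subset p' <= p} -> {subset n' <= n} -> good p' n'.
Hypothesis good_split : forall p n a, good p n -> good (a :: p) n \/ good p (a :: n).
Hypothesis good_nil : good [::] [::].

(* The literal [inl a] asserts [P a], and [inr a] asserts [~ P a]. *)
Let consistent (Z : T + T -> Prop) : Prop :=
  forall p n, (forall a, a \in p -> Z (inl a)) -> (forall a, a \in n -> Z (inr a)) ->
  good p n.

Let consistent_chain (F : (T + T -> Prop) -> Prop) :
  classical_sets.subset F consistent ->
  classical_sets.total_on F classical_sets.subset ->
  consistent (classical_sets.bigcup F id).
Proof.
move=> Fcons Ftot p n pF nF.
have [|/eqP|[Z FZ Zpn]] := chain_finite_bound (s := map inl p ++ map inr n) Ftot.
- by move=> _ /[!mem_cat] /orP[] /mapP[a ? ->]; [apply: pF|apply: nF].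
- by case: p n {pF nF} => [|? ?] [|? ?] // _; apply: good_sub good_nil _ _.
apply: Fcons FZ _ _ _ _ => a ?; apply: Zpn; by rewrite mem_cat map_f ?orbT.
Qed.

Lemma total_extension : exists P : T -> Prop,
  forall p n, (forall a, a \in p -> P a) -> (forall a, a \in n -> ~ P a) -> good p n.
Proof.
have [Z [consZ maxZ]] := classical_sets.Zorn_bigcup consistent_chain.
have grow u : ~ Z u -> exists p n, [/\ forall a, a \in p -> Z (inl a) \/ inl a = u,
    forall a, a \in n -> Z (inr a) \/ inr a = u & ~ good p n].
  move=> Zu; apply: contrapT => no_pn; apply: (maxZ (fun v => Z v \/ v = u)).
    by split=> [v|/(_ u (or_intror erefl))//]; left.
  move=> p n pZ nZ; apply: contrapT => bad; apply: no_pn; by exists p, n.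
have Zlit a : Z (inl a) \/ Z (inr a).
  apply: contrapT => /not_orP[/grow[p1 [n1 [p1Z n1Z bad1]]] /grow[p2 [n2 [p2Z n2Z bad2]]]].
  pose p := [seq b <- p1 | b != a] ++ p2; pose n := n1 ++ [seq b <- n2 | b != a].
  have : good p n.
    apply: consZ => b; rewrite mem_cat ?mem_filter => /orP[].
    - by case/andP=> ba /p1Z[//|[eq_ba]]; rewrite eq_ba eqxx in ba.
    - by case/p2Z.
    - by case/n1Z.
    - by case/andP=> ba /n2Z[//|[eq_ba]]; rewrite eq_ba eqxx in ba.
  case/(good_split a) => good_a.
    apply: bad1 (good_sub good_a _ _) => b; rewrite ?inE mem_cat mem_filter => bn.
      by case: eqP => //= _; rewrite bn.
    by rewrite bn.
  apply: bad2 (good_sub good_a _ _) => b; rewrite ?inE mem_cat ?mem_filter => bn.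
    by rewrite bn orbT.
  by case: eqP => //= _; rewrite bn orbT.
exists (fun a => Z (inl a)) => p n pP nP; apply: consZ => // a /nP.
by case: (Zlit a).
Qed.
End TotalExtension.

Section PrimeFilters.
Variables (d : Order.disp_t) (A : tbDistrLatticeType d).
Implicit Types (a b c : A) (p n : seq A).
Local Notation X := (pspace A).

Lemma meets_le_mem a p : a \in p -> meets p <= a.
Proof. by move=> ap; apply: meets_inf_seq. Qed.

Lemma le_joins_mem a p : a \in p -> a <= joins p.
Proof. by move=> ap; apply: joins_sup_seq. Qed.

Lemma meets_subset p q : {subset p <= q} -> meets q <= meets p.
Proof. by move=> pq; apply/meetsP_seq => a /pq ap _; apply: meets_le_mem. Qed.

Lemma joins_subset p q : {subset p <= q} -> joins p <= joins q.
Proof. by move=> pq; apply/joinsP_seq => a /pq ap _; apply: le_joins_mem. Qed.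

Lemma le_cut a x y m1 m2 j1 j2 :
  a `&` x `&` m1 <= y `|` j1 -> x `&` m2 <= a `|` y `|` j2 ->
  x `&` (m1 `&` m2) <= y `|` (j1 `|` j2).
Proof.
move=> le1 le2; set m := x `&` _; set j := y `|` _.
have ma_j : m `&` a <= j.
  apply: le_trans (le_trans _ le1) (leU2 (lexx _) (leUl _ _)).
  by rewrite !lexI leIr (leIxl _ (leIl _ _)) /= (leIxl _ (leIxr _ (leIl _ _))).
have m_aj : m <= a `|` j.
  apply: le_trans (le_trans (leI2 (lexx _) (leIr _ _)) le2) _.
  by rewrite -joinA leU2 // leU2 // leUr.
by rewrite -(meet_idPl m_aj) meetUr leUx ma_j leIr.
Qed.

Definition finitely_separated (Pos Neg : A -> Prop) : Prop :=
  forall p n, (forall a, a \in p -> Pos a) -> (forall a, a \in n -> Neg a) ->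
  ~ meets p <= joins n.

Lemma prime_filter_of_separated (P : A -> Prop) :
  finitely_separated P (fun a => ~ P a) -> prime_filter P.
Proof.
have in2 a b (Q : A -> Prop) : Q a -> Q b -> forall c, c \in [:: a; b] -> Q c.
  by move=> ? ? c /[!inE] /orP[]/eqP->.
move=> sepP; split; [|split; [|split; [|split]]].
- apply: contrapT => nP1; apply: (sepP [::] [:: \top]) => //; first exact: forall_in_seq1.
  by rewrite big_seq1 lex1.
- move=> a b ab Pa; apply: contrapT => nPb.
  by apply: (sepP [:: a] [:: b]); [exact: forall_in_seq1|exact: forall_in_seq1|rewrite !big_seq1].
- move=> a b Pa Pb; apply: contrapT => nPab.
  apply: (sepP [:: a; b] [:: a `&` b]); [exact: in2|exact: forall_in_seq1|].
  by rewrite big_seq1 !big_cons big_nil meetx1.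
- by move=> P0; apply: (sepP [:: \bot] [::]) => //; [exact: forall_in_seq1|rewrite big_seq1].
- move=> a b Pab; apply: contrapT => /not_orP[nPa nPb].
  apply: (sepP [:: a `|` b] [:: a; b]); [exact: forall_in_seq1|exact: in2|].
  by rewrite big_seq1 !big_cons big_nil joinx0.
Qed.

Lemma prime_filter_theorem (Pos Neg : A -> Prop) : finitely_separated Pos Neg ->
  exists x : X, (forall a, Pos a -> sset a x) /\ (forall a, Neg a -> ~ sset a x).
Proof.
move=> sepPN.
pose good p n := forall p0 n0, (forall a, a \in p0 -> Pos a) ->
  (forall a, a \in n0 -> Neg a) -> ~ meets p `&` meets p0 <= joins n `|` joins n0.
have [P goodP] : exists P : A -> Prop, forall p n, (forall a, a \in p -> P a) ->
    (forall a, a \in n -> ~ P a) -> good p n.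
  apply: total_extension.
  - move=> p n p' n' gpn pp' nn' p0 n0 p0P n0N le_pn; apply: (gpn p0 n0 p0P n0N).
    apply: le_trans (le_trans (leI2 (meets_subset pp') (lexx _)) le_pn) _.
    exact: leU2 (joins_subset nn') (lexx _).
  - move=> p n a gpn; apply: contrapT => /not_orP[].
    move=> /existsNP[p1 /existsNP[n1 /not_implyP[p1P /not_implyP[n1N /contrapT le1]]]].
    move=> /existsNP[p2 /existsNP[n2 /not_implyP[p2P /not_implyP[n2N /contrapT le2]]]].
    apply: (gpn (p1 ++ p2) (n1 ++ n2)).
    + by move=> c /[!mem_cat] /orP[/p1P|/p2P].
    + by move=> c /[!mem_cat] /orP[/n1N|/n2N].
    by move: le1 le2; rewrite !big_cons !big_cat; apply: le_cut.
  - by move=> p0 n0; rewrite !big_nil meet1x join0x; apply: sepPN.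
have sepP : finitely_separated P (fun a => ~ P a).
  move=> p n pP nP le_pn; apply: (goodP p n pP nP [::] [::]) => //.
  by rewrite !big_nil meetx1 joinx0.
exists (exist _ P (prime_filter_of_separated sepP)); split=> a /= aPN.
- apply: contrapT => nPa; apply: (goodP [::] [:: a] _ _ [:: a] [::]) => //;
    try exact: forall_in_seq1.
  by rewrite !big_nil !big_seq1 meet1x joinx0.
- move=> Pa; apply: (goodP [:: a] [::] _ _ [::] [:: a]) => //; try exact: forall_in_seq1.
  by rewrite !big_nil !big_seq1 meetx1 join0x.
Qed.
End PrimeFilters.

Section Points.
Variables (d : Order.disp_t) (A : tbDistrLatticeType d).
Implicit Types (a b c : A) (p n : seq A).
Local Notation X := (pspace A).

Section OnePoint.
Variable x : X.

Lemma sset_top : sset \top x.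
Proof. by case: (proj2_sig x). Qed.

Lemma sset_le a b : a <= b -> sset a x -> sset b x.
Proof. by case: (proj2_sig x) => _ [up _]; apply: up. Qed.

Lemma sset_bot : ~ sset \bot x.
Proof. by case: (proj2_sig x) => _ [_ [_ []]]. Qed.

Lemma sset_meet a b : sset (a `&` b) x <-> sset a x /\ sset b x.
Proof.
split=> [ab|[]]; last by case: (proj2_sig x) => _ [_ [meet _]]; apply: meet.
by split; apply: sset_le ab; [apply: leIl|apply: leIr].
Qed.

Lemma sset_join a b : sset (a `|` b) x <-> sset a x \/ sset b x.
Proof.
split=> [|[]]; [|apply: sset_le; exact: leUl|apply: sset_le; exact: leUr].
by case: (proj2_sig x) => _ [_ [_ [_ join]]]; apply: join.
Qed.

Lemma sset_meets p : sset (meets p) x <-> forall a, a \in p -> sset a x.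
Proof.
split=> [pa a ap|]; first by apply: sset_le pa; apply: meets_le_mem.
elim: p => [_|a p IH ap]; rewrite ?big_nil ?big_cons; first exact: sset_top.
apply/sset_meet; split; first by apply: ap; rewrite mem_head.
by apply: IH => b bp; apply: ap; rewrite inE bp orbT.
Qed.

Lemma sset_joins p : sset (joins p) x -> exists2 a, a \in p & sset a x.
Proof.
elim: p => [|a p IH]; rewrite ?big_nil ?big_cons; first by move/sset_bot.
case/sset_join=> [xa|/IH[b bp xb]]; first by exists a; rewrite ?mem_head.
by exists b; rewrite // inE bp orbT.
Qed.

End OnePoint.

Lemma le_sset a b : a <= b <-> forall x, sset a x -> sset b x.
Proof.
split=> [ab x|ab]; first exact: sset_le.
apply: contrapT => nab; have [|x [xa xb]] := @prime_filter_theorem _ A (eq^~ a) (eq^~ b).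
  move=> p n pa nb le_pn; apply: nab; apply: le_trans (le_trans _ le_pn) _.
    by apply/meetsP_seq => c /pa ->.
  by apply/joinsP_seq => c /nb ->.
exact: xb (ab x (xa a erefl)).
Qed.

Lemma not_pf_le x y : ~ pf_le x y -> exists c, sset c x /\ ~ sset c y.
Proof.
move=> /existsNP[c /not_implyP xy]; by exists c.
Qed.

End Points.

Section Topology.
Variables (d : Order.disp_t) (A : tbDistrLatticeType d).
Implicit Types (a b c : A) (p n : seq A).
Local Notation X := (pspace A).
Implicit Types (x y z : X) (S U V W C : X -> Prop).

Lemma basic_meet a b a' b' x :
  basic (a `&` a') (b `|` b') x <-> basic a b x /\ basic a' b' x.
Proof. rewrite /basic sset_meet sset_join; tauto. Qed.

Lemma basic_bot a x : basic a \bot x <-> sset a x.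
Proof. by split=> [[]//|]; split=> //; apply: sset_bot. Qed.

Lemma basic_top b x : basic \top b x <-> ~ sset b x.
Proof. by split=> [[]//|]; split=> //; apply: sset_top. Qed.

Lemma open_basic a b : is_open (basic a b).
Proof. by move=> x ?; exists a, b. Qed.

Lemma open_sset a : is_open (sset a).
Proof. by move=> x /basic_bot ?; exists a, \bot; split=> // y /basic_bot. Qed.

Lemma closed_sset a : is_closed (sset a).
Proof. by move=> x /basic_top ?; exists \top, a; split=> // y /basic_top. Qed.

Lemma closed_basic a b : is_closed (basic a b).
Proof.
move=> x /not_andP[xa|/contrapT xb].
  by exists \top, a; split=> [|y /basic_top ya []]; first exact/basic_top.
by exists b, \bot; split=> [|y /basic_bot yb []]; first exact/basic_bot.
Qed.

Lemma clopen_sset a : clopen (sset a).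
Proof. by split; [apply: open_sset|apply: closed_sset]. Qed.

Lemma clopen_basic a b : clopen (basic a b).
Proof. by split; [apply: open_basic|apply: closed_basic]. Qed.

Lemma closed_openC U : is_open U -> is_closed (complP U).
Proof.
by rewrite /is_closed (_ : complP (complP U) = U) //; apply/predeqP => x; apply: not_notP.
Qed.

Lemma open_int S : is_open (int S).
Proof. by move=> x [a [b [xab abS]]]; exists a, b; split=> // y yab; exists a, b. Qed.

Lemma int_sub S x : int S x -> S x.
Proof. by case=> a [b [xab abS]]; apply: abS. Qed.

Lemma sub_cl S x : S x -> cl S x.
Proof. by move=> Sx a b xab; exists x. Qed.

Lemma cl_sub S V x : (forall y, S y -> V y) -> cl S x -> cl V x.
Proof. by move=> SV Sx a b /Sx[y [/SV Vy yab]]; exists y. Qed.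

Lemma cl_closed C x : is_closed C -> cl C x -> C x.
Proof.
move=> cC Cx; apply: contrapT => /cC[a [b [xab abC]]].
by have [y [Cy /abC]] := Cx a b xab.
Qed.

Lemma closed_cl S : is_closed (cl S).
Proof.
move=> x /existsNP[a /existsNP[b /not_implyP[xab /forallNP abS]]].
exists a, b; split=> // y yab Sy; have [z [Sz zab]] := Sy a b yab.
by apply: (abS z).
Qed.

Lemma cl_cl S x : cl (cl S) x -> cl S x.
Proof. by apply: cl_closed; apply: closed_cl. Qed.

Lemma cl_open_meet U S x : is_open U -> U x -> cl S x -> cl (fun y => U y /\ S y) x.
Proof.
move=> oU Ux Sx a b xab; have [a' [b' [xab' abU]]] := oU x Ux.
have [y [Sy /basic_meet[yab yab']]] := Sx _ _ (iffRL (basic_meet _ _ _ _ _) (conj xab xab')).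
by exists y; split=> //; split=> //; apply: abU.
Qed.

Section Compactness.
Variables (C : X -> Prop) (Cov : A * A -> Prop).
Hypothesis cC : is_closed C.

Let covered_by (L : seq (A * A)) : Prop := forall ab, ab \in L -> Cov ab.

Let good p n : Prop := forall L, covered_by L -> exists x, [/\ C x,
  forall a, a \in p -> sset a x, forall a, a \in n -> ~ sset a x &
  forall ab, ab \in L -> ~ basic ab.1 ab.2 x].

Let good_sub p n p' n' : good p n -> {subset p' <= p} -> {subset n' <= n} -> good p' n'.
Proof.
move=> gpn pp' nn' L /gpn[x [Cx px nx Lx]].
by exists x; split=> // a ?; [apply: px|apply: nx]; [apply: pp'|apply: nn'].
Qed.

Let good_split p n a : good p n -> good (a :: p) n \/ good p (a :: n).
Proof.
move=> gpn; apply: contrapT => /not_orP[/existsNP[L1 nL1] /existsNP[L2 nL2]].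
move: nL1 nL2 => /not_implyP[L1Cov nx1] /not_implyP[L2Cov nx2].
have [|x [Cx px nx Lx]] := gpn (L1 ++ L2).
  by move=> ab /[!mem_cat] /orP[/L1Cov|/L2Cov].
have [xa|xa] := lem (sset a x); [apply: nx1|apply: nx2]; exists x; split=> //.
- by move=> b /[!inE] /predU1P[->|/px].
- by move=> ab abL; apply: Lx; rewrite mem_cat abL.
- by move=> b /[!inE] /predU1P[->|/nx].
- by move=> ab abL; apply: Lx; rewrite mem_cat abL orbT.
Qed.

Theorem compact_closed : (forall x, C x -> exists2 ab, Cov ab & basic ab.1 ab.2 x) ->
  exists2 L : seq (A * A), (forall ab, ab \in L -> Cov ab) &
    forall x, C x -> exists2 ab, ab \in L & basic ab.1 ab.2 x.
Proof.
(* Without a finite subcover, a maximal good assignment is a point of [C]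
   outside every member of the cover. *)
move=> cov; apply: contrapT => no_subcover.
have [|P goodP] := total_extension good_sub good_split.
  move=> L LCov; apply: contrapT => /forallNP none; apply: no_subcover.
  exists L => // x Cx; apply: contrapT => nx; apply: (none x).
  by split=> // ab abL abx; apply: nx; exists ab.
have nilCov : covered_by [::] by [].
have sepP : finitely_separated P (fun a => ~ P a).
  move=> p n pP nP le_pn; have [x [_ px nx _]] := goodP p n pP nP [::] nilCov.
  have /sset_joins[a an xa] := sset_le le_pn (iffRL (sset_meets _ _) px).
  exact: nx a an xa.
have good1 a b : P a -> ~ P b -> good [:: a] [:: b].
  by move=> Pa nPb; apply: goodP; apply: forall_in_seq1.
pose y : X := exist _ P (prime_filter_of_separated sepP).
have Cy : C y.
  apply: contrapT => /cC[a [b [[ya yb] abC]]].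
  have [x [Cx xa xb _]] := good1 a b ya yb [::] nilCov.
  by apply: (abC x) Cx; split; [apply: xa|apply: xb]; rewrite mem_head.
have [ab Cab [ya yb]] := cov y Cy.
have [x [_ xa xb]] := good1 _ _ ya yb [:: ab] (forall_in_seq1 (Q := Cov) Cab).
by case/(_ ab (mem_head _ _)); split; [apply: xa|apply: xb]; rewrite mem_head.
Qed.

End Compactness.

Lemma compact_sset C (Q : A -> Prop) : is_closed C ->
  (forall x, C x -> exists2 c, Q c & sset c x) ->
  exists2 l, (forall c, c \in l -> Q c) & forall x, C x -> sset (joins l) x.
Proof.
move=> cC cov; have [|L LQ LC] := @compact_closed C (fun ab => Q ab.1 /\ ab.2 = \bot) cC.
  by move=> x /cov[c Qc xc]; exists (c, \bot) => //; apply/basic_bot.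
exists (map fst L) => [c /mapP[ab /LQ[? _] ->]//|x /LC[ab abL [xab _]]].
by apply: sset_le xab; apply: le_joins_mem; rewrite map_f.
Qed.

Lemma compact_nsset C (Q : A -> Prop) : is_closed C ->
  (forall x, C x -> exists2 c, Q c & ~ sset c x) ->
  exists2 l, (forall c, c \in l -> Q c) & forall x, C x -> ~ sset (meets l) x.
Proof.
move=> cC cov; have [|L LQ LC] := @compact_closed C (fun ab => ab.1 = \top /\ Q ab.2) cC.
  by move=> x /cov[c Qc xc]; exists (\top, c) => //; apply/basic_top.
exists (map snd L) => [c /mapP[ab /LQ[_ ?] ->]//|x /LC[ab abL [_ xab]] xl].
by apply: xab (sset_le _ xl); apply: meets_le_mem; rewrite map_f.
Qed.

Lemma clopen_basic_cover U : clopen U -> exists L : seq (A * A),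
  forall x, U x <-> exists2 ab, ab \in L & basic ab.1 ab.2 x.
Proof.
case=> oU cU.
have [|L LU UL] := @compact_closed U (fun ab => forall y, basic ab.1 ab.2 y -> U y) cU.
  by move=> x /oU[a [b [xab abU]]]; exists (a, b).
by exists L => x; split=> [/UL//|[ab /LU]]; apply.
Qed.

End Topology.

(* [is_open], [is_closed] and [upsetX] unfold to products, which would make
   these parameters implicit. *)
Arguments open_basic {d A} a b.
Arguments closed_basic {d A} a b.
Arguments open_sset {d A} a.
Arguments closed_sset {d A} a.
Arguments open_int {d A} S.
Arguments closed_cl {d A} S.

Section PriestleyOrder.
Variables (d : Order.disp_t) (A : tbDistrLatticeType d).
Implicit Types (a b c : A).
Local Notation X := (pspace A).
Implicit Types (x y z : X) (S U V W C : X -> Prop).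

Lemma upset_sset a : upsetX (sset a).
Proof. by move=> x y xy /xy. Qed.

Lemma upset_up S : upsetX (up S).
Proof. by move=> x y xy [z [Sz zx]]; exists z; split=> // a /zx /xy. Qed.

Lemma upset_complP_down S : upsetX (complP (down S)).
Proof. by move=> x y xy nx [z [Sz yz]]; apply: nx; exists z; split=> // a /xy /yz. Qed.

Lemma open_upset_sset W x : is_open W -> upsetX W -> W x ->
  exists2 c, sset c x & forall y, sset c y -> W y.
Proof.
move=> oW uW Wx; have [|l lx lW] := compact_nsset (Q := fun c => sset c x) (closed_openC oW).
  by move=> y Wy; have [c []] := not_pf_le (fun xy => Wy (uW _ _ xy Wx)); exists c.
exists (meets l); first exact/sset_meets.
by move=> y yl; apply: contrapT => /lW.
Qed.

Lemma closed_upset_sep C y : is_closed C -> upsetX C -> ~ C y ->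
  exists2 u, (forall x, C x -> sset u x) & ~ sset u y.
Proof.
move=> cC uC Cy; have [|l ly lC] := compact_sset (Q := fun c => ~ sset c y) cC.
  by move=> x Cx; have [c []] := not_pf_le (fun xy => Cy (uC _ _ xy Cx)); exists c.
by exists (joins l) => // /sset_joins[c /ly].
Qed.

Lemma closed_down C : is_closed C -> is_closed (down C).
Proof.
move=> cC y Cy; have [|l ly lC] := compact_nsset (Q := fun c => sset c y) cC.
  by move=> z Cz; have [c []] := not_pf_le (fun yz => Cy (ex_intro _ z (conj Cz yz))); exists c.
exists (meets l), \bot; split; first exact/basic_bot/sset_meets.
by move=> w /basic_bot wl [z [Cz wz]]; apply: (lC z Cz); apply: wz.
Qed.

Lemma closed_up C : is_closed C -> is_closed (up C).
Proof.
move=> cC y Cy; have [|l ly lC] := compact_sset (Q := fun c => ~ sset c y) cC.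
  by move=> z Cz; have [c []] := not_pf_le (fun zy => Cy (ex_intro _ z (conj Cz zy))); exists c.
exists \top, (joins l); split; first by apply/basic_top => /sset_joins[c /ly].
by move=> w /basic_top wl [z [Cz zw]]; apply/wl/zw/lC.
Qed.

Lemma clopen_upset_sset U : clopen U -> upsetX U -> exists a, forall x, U x <-> sset a x.
Proof.
move=> [oU cU] uU.
have [|l lU lx] := compact_nsset (Q := fun c => forall x, U x -> sset c x) (closed_openC oU).
  by move=> y Uy; have [c] := closed_upset_sep cU uU Uy; exists c.
exists (meets l) => x; split=> [Ux|xl]; first by apply/sset_meets => c /lU; apply.
by apply: contrapT => /lx.
Qed.

Lemma open_int1 S : is_open (int1 S).
Proof. exact/closed_down/closed_openC/open_int. Qed.

Lemma upset_int1 S : upsetX (int1 S).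
Proof. exact: upset_complP_down. Qed.

Lemma int1_sub S x : int1 S x -> S x.
Proof. by move=> Sx; apply: int_sub; apply: contrapT => nx; apply: Sx; exists x; split. Qed.

Lemma sub_int1 W S x : is_open W -> upsetX W -> (forall y, W y -> S y) -> W x -> int1 S x.
Proof.
move=> oW uW WS Wx [y [nSy xy]]; apply: nSy.
have [a [b [yab abW]]] := oW y (uW _ _ xy Wx).
by exists a, b; split=> // z /abW /WS.
Qed.

End PriestleyOrder.

Arguments upset_sset {d A} a.
Arguments upset_up {d A} S.
Arguments upset_complP_down {d A} S.
Arguments open_int1 {d A} S.
Arguments upset_int1 {d A} S.

Section DistributiveJoins.
Variables (d : Order.disp_t) (A : tbDistrLatticeType d).
Implicit Types (a b c : A) (S T : A -> Prop).
Local Notation X := (pspace A).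

Definition sset_union T : X -> Prop := fun x => exists s, T s /\ sset s x.

Lemma open_sset_union T : is_open (sset_union T).
Proof.
move=> x [s [Ts xs]]; exists s, \bot; split; first exact/basic_bot.
by move=> y /basic_bot ys; exists s.
Qed.

Lemma upset_sset_union T : upsetX (sset_union T).
Proof. by move=> x y xy [s [Ts xs]]; exists s; split=> //; apply: xy. Qed.

Lemma dist_join_atP T a :
  dist_join_at T a <-> forall x, cl (sset_union T) x <-> sset a x.
Proof.
split=> [[[Ta _] distr] x|Ta_cl].
  split=> [Tx|xa].
    apply: cl_closed (closed_sset a) _; apply: cl_sub Tx => y [s [Ts]].
    exact/sset_le/Ta.
  move=> p q [xp xq]; apply: contrapT => /forallNP noT.
  have /le_sset pa_q : p `&` a <= q.
    apply: (proj2 (distr p)) => _ [s [Ts ->]]; apply/le_sset => y /sset_meet[yp ys].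
    by apply: contrapT => yq; apply: (noT y); split; [exists s|].
  exact/xq/pa_q/sset_meet.
have Ta s : T s -> s <= a.
  by move=> Ts; apply/le_sset => x xs; apply/Ta_cl/sub_cl; exists s.
split=> [|b].
  split=> // b Tb; apply/le_sset => x /Ta_cl xT.
  apply: cl_closed (closed_sset b) _; apply: cl_sub xT => y [s [Ts]].
  exact/sset_le/Tb.
split=> [_ [s [Ts ->]]|e be]; first exact: leI2 (lexx b) (Ta s Ts).
apply/le_sset => x /sset_meet[xb /Ta_cl xT]; apply: contrapT => xe.
have [y [[s [Ts ys]] [yb ye]]] := xT b e (conj xb xe).
by apply/ye/(sset_le (be _ _))/sset_meet; [exists s|].
Qed.

End DistributiveJoins.

Arguments open_sset_union {d A} T.
Arguments upset_sset_union {d A} T.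

Section Cardinals.
Variable K : Type.

Lemma lt_card_inhabited (T : Type) (S : T -> Prop) : lt_card S K -> inhabited K.
Proof.
case=> _ no_emb; apply: contrapT => noK; apply: no_emb.
have K0 k : False := noK (inhabits k).
by exists (fun k => match K0 k with end); split=> k; case: (K0 k).
Qed.

Lemma lt_card_image (T T' : Type) (S : T -> Prop) (f : T -> T') :
  lt_card S K -> lt_card (fun y => exists x, S x /\ y = f x) K.
Proof.
move=> SK; have [k0] := lt_card_inhabited SK; case: SK => [[i i_inj] no_emb].
(* Choosing in [option T] avoids needing an inhabitant of [T]. *)
have /choice[g gP] : forall y, exists o : option T, (exists x, S x /\ y = f x) ->
    exists x, [/\ o = Some x, S x & y = f x].
  move=> y; have [[x [Sx ->]]|no_x] := lem (exists x, S x /\ y = f x).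
    by exists (Some x) => _; exists x.
  by exists None.
split.
  exists (fun y => if g y is Some x then i x else k0) => y1 y2 /gP[x1 [-> S1 ->]].
  by case/gP=> x2 [-> S2 ->] /i_inj ->.
case=> e [e_inj e_img]; have [x0 [_ _ _]] := gP _ (e_img k0).
apply: no_emb; exists (fun k => odflt x0 (g (e k))); split.
  move=> k l; have [xk [-> _ ek]] := gP _ (e_img k); have [xl [-> _ el]] := gP _ (e_img l).
  by move=> /= exl; apply: e_inj; rewrite ek el exl.
by move=> k; have [xk [-> Sk _]] := gP _ (e_img k).
Qed.

Lemma lt_card1 (T : Type) (t : T) : regular_card K -> lt_card (eq^~ t) K.
Proof.
case=> [[n n_inj] _]; split; first by exists (fun _ => n 0) => y1 y2 -> ->.
by case=> e [e_inj e_t]; have := n_inj 0 1 (e_inj _ _ (etrans (e_t _) (esym (e_t _)))).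
Qed.

Lemma lt_card_image2 (T1 T2 T3 : Type) (S1 : T1 -> Prop) (S2 : T2 -> Prop)
    (op : T1 -> T2 -> T3) : regular_card K -> lt_card S1 K -> lt_card S2 K ->
  lt_card (fun c => exists s t, [/\ S1 s, S2 t & c = op s t]) K.
Proof.
move=> [_ regK] S1K S2K.
pose rows := fun R : T3 -> Prop => exists s, S1 s /\ R = (fun c => exists t, S2 t /\ c = op s t).
have rowsK R : rows R -> lt_card R K by case=> s [_ ->]; apply: lt_card_image.
have := regK T3 rows (lt_card_image _ S1K) rowsK.
congr lt_card; apply/predeqP => c; split.
  by case=> _ [[s [S1s ->]] [t [S2t ->]]]; exists s, t.
case=> s [t [S1s S2t ->]]; exists (fun c => exists t, S2 t /\ c = op s t).
by split; [exists s|exists t].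
Qed.

End Cardinals.

Section DIdeals.
Variables (d : Order.disp_t) (A : tbDistrLatticeType d).
Implicit Types (a b c : A) (S T E : A -> Prop).
Local Notation X := (pspace A).
Implicit Types (x y : X) (U V W : X -> Prop).

Definition D_gen S : A -> Prop :=
  fun c => forall E, D_ideal E -> (forall s, S s -> E s) -> E c.

Definition ideal_of W : A -> Prop := fun c => forall x, sset c x -> W x.

Lemma D_ideal_gen S : D_ideal (D_gen S).
Proof.
split=> [c c' c'c Sc E idE SE|T a TS Ta E idE SE].
  by case: idE (Sc E idE SE) => down _; apply: down.
by case: (idE) => _ join; apply: join Ta => t /TS; apply.
Qed.

Lemma D_gen_sub S s : S s -> D_gen S s.
Proof. by move=> Ss E _; apply. Qed.

Lemma ideal_of_int1 W : ideal_of (int1 W) = ideal_of W.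
Proof.
apply/predeqP => c; split=> cW x xc; first exact: int1_sub (cW x xc).
exact: (sub_int1 (open_sset c) (upset_sset c) cW).
Qed.

Lemma ideal_of_inj W V : is_open W -> upsetX W -> is_open V -> upsetX V ->
  ideal_of W = ideal_of V -> W = V.
Proof.
have sub W' V' : is_open W' -> upsetX W' -> ideal_of W' = ideal_of V' -> forall x, W' x -> V' x.
  move=> oW uW WV x /(open_upset_sset oW uW)[c xc cW].
  by have /(_ x xc) : ideal_of V' c by rewrite -WV.
move=> oW uW oV uV WV; apply/predeqP => x.
by split; apply: sub => //; rewrite WV.
Qed.

Lemma D_genE S : D_gen S = ideal_of (cl (sset_union S)).
Proof.
apply/predeqP => c; split=> [|Sc E [down join] SE].
  apply; last by move=> s Ss x xs; apply: sub_cl; exists s.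
  split=> [c1 c2 c21 c1S x xc2|T a TS /dist_join_atP Ta x /Ta xT].
    exact/c1S/(sset_le c21).
  by apply: cl_cl; apply: cl_sub xT => y [t [/TS tS yt]]; apply: tS.
apply: (join (fun t => exists s, S s /\ t = c `&` s)).
  by move=> _ [s [Ss ->]]; apply: down (leIr _ _) (SE s Ss).
apply/dist_join_atP => x; split.
  move=> xT; apply: cl_closed (closed_sset c) _.
  by apply: cl_sub xT => y [_ [[s [_ ->]] /sset_meet[]]].
move=> xc; have := cl_open_meet (open_sset c) xc (Sc x xc).
apply: cl_sub => y [yc [s [Ss ys]]]; exists (c `&` s); split; first by exists s.
exact/sset_meet.
Qed.

Lemma D_gen_ideal_of S : D_gen S = ideal_of (int1 (cl (sset_union S))).
Proof. by rewrite ideal_of_int1 D_genE. Qed.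

Lemma D_gen1 a : D_gen (eq^~ a) = principal a.
Proof.
apply/predeqP => c; split=> [|ca E [down _] aE]; last exact: down ca (aE a erefl).
apply; last by move=> s ->; apply: lexx.
by split=> [c1 c2 c21 c1a|T b Ta [[_ Tb] _]]; [apply: le_trans c1a|apply: Tb].
Qed.

Lemma D_gen_meet S T : BL_meet (D_gen S) (D_gen T) =
  D_gen (fun c => exists s t, [/\ S s, T t & c = s `&` t]).
Proof.
apply/predeqP => c; split=> [[]|ST]; last first.
  split; apply: ST (D_ideal_gen _) _ => _ [s [t [Ss Tt ->]]].
    by case: (D_ideal_gen S) => down _; apply: down (leIl _ _) (D_gen_sub Ss).
  by case: (D_ideal_gen T) => down _; apply: down (leIr _ _) (D_gen_sub Tt).
rewrite !D_genE => Sc Tc x xc.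
pose O y := sset c y /\ sset_union S y.
have oO : is_open O.
  move=> y [yc [s [Ss ys]]]; exists (c `&` s), \bot; split; first exact/basic_bot/sset_meet.
  by move=> z /basic_bot/sset_meet[zc zs]; split=> //; exists s.
have xO : cl O x := cl_open_meet (open_sset c) xc (Sc x xc).
apply: cl_cl; apply: cl_sub xO => y Oy; have := cl_open_meet oO Oy (Tc y (proj1 Oy)).
apply: cl_sub => z [[_ [s [Ss zs]]] [t [Tt zt]]].
by exists (s `&` t); split; [exists s, t|apply/sset_meet].
Qed.

End DIdeals.

Section KappaGenerated.
Variables (d : Order.disp_t) (A : tbDistrLatticeType d) (K : Type).
Hypothesis regK : regular_card K.
Implicit Types (a b c : A) (S T D E : A -> Prop).
Local Notation X := (pspace A).
Implicit Types (x y : X) (U V W : X -> Prop).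

Definition kgenerated D : Prop := exists2 S, lt_card S K & D = D_gen S.

Lemma kgenerated_sub_kframe : sub_kframe_containing_A K kgenerated.
Proof.
split; [|split; [|split]].
- by move=> _ [S _ ->]; apply: D_ideal_gen.
- by move=> a; exists (eq^~ a); rewrite ?D_gen1 //; apply: lt_card1.
- move=> _ _ [S SK ->] [T TK ->]; rewrite D_gen_meet.
  by eexists; last reflexivity; apply: lt_card_image2.
move=> F Fgen FK; have /choice[gen genP] : forall D, exists S, F D -> lt_card S K /\ D = D_gen S.
  move=> D; have [/Fgen[S SK DS]|nFD] := lem (F D); first by exists S.
  by exists (fun _ => False).
pose gens := fun R => exists D, F D /\ R = gen D.
exists (Defs.bigcupP gens).
  apply: (proj2 regK) (lt_card_image _ FK) _ => _ [D [FD ->]].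
  by case: (genP D FD).
apply/predeqP => c; split=> Fc E idE FE.
  apply: (Fc E idE) => D FD y; rewrite (proj2 (genP D FD)); apply=> // s Ss.
  by apply: FE; exists (gen D); split; first exists D.
apply: (Fc E idE) => s [_ [[D [FD ->]] Ds]].
by apply: (FE D FD s); rewrite (proj2 (genP D FD)); apply: D_gen_sub.
Qed.

Lemma BLkP D : BLk K D <-> kgenerated D.
Proof.
split=> [|[S SK ->] G [_ [Gprinc [_ Gjoin]]]]; first by apply; apply: kgenerated_sub_kframe.
pose princ := fun I => exists s, S s /\ I = principal s.
have -> : D_gen S = BL_join princ.
  apply/predeqP => c; split=> Sc E idE SE; apply: (Sc _ idE).
    by move=> s Ss; apply: SE (lexx s); exists s.
  by move=> _ [s [Ss ->]] y ys; case: idE => down _; apply: down ys (SE s Ss).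
by apply: Gjoin; [move=> _ [s [_ ->]]|apply: lt_card_image].
Qed.

Lemma BLk_meet D E : BLk K D -> BLk K E -> BLk K (BL_meet D E).
Proof.
by move=> BD BE G Gframe; case: (Gframe) => _ [_ [Gmeet _]]; apply: Gmeet; [apply: BD|apply: BE].
Qed.

Lemma BLk_top : BLk K (fun _ : A => True).
Proof.
move=> G [_ [Gprinc _]]; rewrite (_ : (fun _ => True) = principal \top) //.
by apply/predeqP => c; split=> // _; apply: lex1.
Qed.

Lemma kclopen_upsetP V : kclopen_upset K V <-> exists2 S, lt_card S K & V = sset_union S.
Proof.
split=> [[F [FK [Fclopen ->]]]|[S SK ->]]; last first.
  exists (fun V => exists s, S s /\ V = sset s); split; first exact: lt_card_image.
  split=> [_ [s [_ ->]]|]; first by split; [apply: clopen_sset|apply: upset_sset].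
  apply/predeqP => x; split=> [[s [Ss xs]]|[_ [[s [Ss ->]] xs]]]; last by exists s.
  by exists (sset s); split=> //; exists s.
have /choice[gen genP] : forall U, exists a, F U -> forall x, U x <-> sset a x.
  move=> U; have [/Fclopen[cU uU]|nFU] := lem (F U); last by exists \top.
  by have [a Ua] := clopen_upset_sset cU uU; exists a.
exists (fun a => exists U, F U /\ a = gen U); first exact: lt_card_image.
apply/predeqP => x; split=> [[U [FU Ux]]|[_ [[U [FU ->]] xU]]].
  by exists (gen U); split; [exists U|apply/(genP U FU)].
by exists U; split=> //; apply/(genP U FU).
Qed.

Lemma BLkXP W : BLkX K W <-> exists2 S, lt_card S K & W = int1 (cl (sset_union S)).
Proof.
split=> [[V [/kclopen_upsetP[S SK ->] ->]]|[S SK ->]]; first by exists S.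
by exists (sset_union S); split=> //; apply/kclopen_upsetP; exists S.
Qed.

Lemma BLk_ideal_ofP W : is_open W -> upsetX W -> BLk K (ideal_of W) <-> BLkX K W.
Proof.
move=> oW uW; rewrite BLkP // BLkXP; split=> [][S SK WS]; exists S => //.
  by apply: (ideal_of_inj oW uW (open_int1 _) (upset_int1 _)); rewrite -D_gen_ideal_of.
by rewrite D_gen_ideal_of WS.
Qed.

End KappaGenerated.

Section CompletenessAndHeyting.
Variables (d : Order.disp_t) (A : tbDistrLatticeType d) (K : Type).
Implicit Types (a b c : A) (S : A -> Prop).
Local Notation X := (pspace A).
Implicit Types (x y : X) (U V W : X -> Prop).

Lemma kappa_frame_kclopenP : kappa_frame A K <->
  forall U, kclopen_upset K U -> clopen (cl U) /\ upsetX (cl U).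
Proof.
split=> [kframe _ /kclopen_upsetP[S /kframe[a /dist_join_atP Sa] ->]|kcl S SK].
  by rewrite (_ : cl _ = sset a); [split; [apply: clopen_sset|apply: upset_sset]|apply/predeqP].
have /kcl[cS uS] : kclopen_upset K (sset_union S) by apply/kclopen_upsetP; exists S.
by have [a Sa] := clopen_upset_sset cS uS; exists a; apply/dist_join_atP.
Qed.

Lemma complete_lattice_eodP : complete_lattice A <-> extremally_order_disconnected A.
Proof.
split=> [complete U oU uU|eod S]; last first.
  have [a Sa] := clopen_upset_sset (eod _ (open_sset_union S) (upset_sset_union S)) (upset_up _).
  exists a; split=> [s Ss|b Sb]; apply/le_sset => x.
    by move=> xs; apply/Sa; exists x; split=> //; apply: sub_cl; exists s.
  move=> /Sa[y [yS yx]]; apply: yx; apply: cl_closed (closed_sset b) _.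
  by apply: cl_sub yS => z [s [Ss zs]]; apply: sset_le (Sb s Ss) zs.
have [a [Ua leUa]] := complete (ideal_of U).
suff -> : cl2 U = sset a by apply: clopen_sset.
apply/predeqP => y; split=> [[x [xU xy]]|ya].
  apply/xy/(cl_closed (closed_sset a))/(cl_sub _ xU) => z /(open_upset_sset oU uU)[c zc cU].
  exact: sset_le (Ua c cU) zc.
apply: contrapT => /(closed_upset_sep (closed_up (closed_cl U)) (upset_up _))[u Uu yu].
apply/yu/(sset_le _ ya)/leUa => c cU; apply/le_sset => x /cU xU.
by apply: Uu; exists x; split=> //; apply: sub_cl.
Qed.

Lemma heyting_esakiaP : heyting_lattice A <-> esakia_space A.
Proof.
split=> [heyting U [oU cU]|esakia b c]; last first.
  have [oD cD] := esakia _ (clopen_basic b c).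
  have [i iD] := clopen_upset_sset (conj cD (closed_openC oD)) (upset_complP_down _).
  exists i => a; split=> [abc|ai]; apply/le_sset => x.
    move=> xa; apply/iD => -[y [[yb yc] xy]].
    by apply/yc/(sset_le abc)/sset_meet; split=> //; apply: xy.
  case/sset_meet=> /(sset_le ai)/iD xD xb; apply: contrapT => xc.
  by apply: xD; exists x; split.
split; last exact: closed_down.
move=> x [y [Uy xy]]; have [a [b [[ya yb] abU]]] := oU y Uy.
have [i iP] := heyting a b; have iab : i `&` a <= b by apply/iP.
(* The complement of [sset (a -> b)] is a neighbourhood of [x] inside [down U]. *)
exists \top, i; split.
  by apply/basic_top => xi; apply/yb/(sset_le iab)/sset_meet; split; [apply: xy|].
move=> z /basic_top zi.
have [|w [zw wb]] := @prime_filter_theorem _ A (fun e => sset e z \/ e = a) (eq^~ b).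
  move=> p n pza nb le_pn; pose p' := [seq e <- p | e != a].
  have p'z e : e \in p' -> sset e z by rewrite mem_filter => /andP[/eqP ea /pza[]].
  have p'ab : meets p' `&` a <= b.
    have -> : meets p' `&` a = meets (a :: p') by rewrite big_cons meetC.
    apply: le_trans (meets_subset _) (le_trans le_pn _).
      by move=> e ep; rewrite inE mem_filter ep andbT; case: eqP.
    by apply/joinsP_seq => e /nb ->.
  by apply/zi/(sset_le (iffLR (iP _) p'ab))/sset_meets.
exists w; split; last by move=> e ze; apply: zw; left.
by apply: abU; split; [apply: zw; right|apply: wb].
Qed.

Lemma join_distr_of_heyting S a : heyting_lattice A -> is_join S a -> dist_join_at S a.
Proof.
move=> heyting [Sa leSa]; split=> // b; split=> [_ [s [Ss ->]]|e be].
  exact: leI2 (lexx b) (Sa s Ss).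
have [i iP] := heyting b e; rewrite meetC; apply/iP/leSa => s Ss.
by apply/iP; rewrite meetC; apply: be; exists s.
Qed.

End CompletenessAndHeyting.

Section Annihilators.
Variables (d : Order.disp_t) (A : tbDistrLatticeType d).
Implicit Types (a b c : A) (D E N : A -> Prop).
Local Notation X := (pspace A).
Implicit Types (x y : X) (U V W : X -> Prop).

Lemma rel_ann_ideal_of a b : rel_ann a b = ideal_of (complP (down (basic a b))).
Proof.
apply/predeqP => c; split=> [abc x xc [y [[ya yb] xy]]|cD].
  by apply/yb/(sset_le abc)/sset_meet; split=> //; apply: xy.
apply/le_sset => x /sset_meet[xa xc]; apply: contrapT => xb.
by apply: (cD x xc); exists x; split.
Qed.

Lemma ideal_of_and V W :
  ideal_of (fun x => V x /\ W x) = BL_meet (ideal_of V) (ideal_of W).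
Proof.
apply/predeqP => c; split=> [VW|[cV cW] x xc]; last by split; [apply: cV|apply: cW].
by split=> x /VW[].
Qed.

Lemma ideal_of_clopen_ind (P : (A -> Prop) -> Prop) U :
  (forall D E, P D -> P E -> P (BL_meet D E)) -> P (fun _ => True) ->
  (forall a b, P (rel_ann a b)) -> clopen U -> P (ideal_of (complP (down U))).
Proof.
move=> Pmeet Ptop Pann /clopen_basic_cover[L UL].
have -> : complP (down U) = fun x => forall ab, ab \in L -> complP (down (basic ab.1 ab.2)) x.
  apply/predeqP => x; split=> [xU ab abL [y [yab xy]]|xL [y [/UL[ab abL yab] xy]]].
    by apply: xU; exists y; split=> //; apply/UL; exists ab.
  by apply: (xL ab abL); exists y.
elim: L {UL} => [|ab L IH].
  by rewrite (_ : ideal_of _ = fun _ => True) //; apply/predeqP.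
rewrite (_ : ideal_of _ = BL_meet (rel_ann ab.1 ab.2) (ideal_of
    (fun x => forall ab, ab \in L -> complP (down (basic ab.1 ab.2)) x))).
  exact: Pmeet.
rewrite rel_ann_ideal_of -ideal_of_and; congr ideal_of; apply/predeqP => x.
split=> [abL|[xab xL] ab']; first by split=> [|ab' ab'L]; apply: abL; rewrite inE ?ab'L ?eqxx ?orbT.
by rewrite inE => /predU1P[->|/xL].
Qed.

Lemma normal_ideal_meet D E :
  normal_ideal D -> normal_ideal E -> normal_ideal (BL_meet D E).
Proof.
move=> [downD eqD] [downE eqE]; split.
  by move=> c c' c'c [Dc Ec]; split; [apply: downD c'c Dc|apply: downE c'c Ec].
apply/predeqP => c; split=> [DEc u|DEc]; first by apply.
by split; [rewrite eqD|rewrite eqE] => u uD; apply: DEc => s [Ds Es]; apply: uD.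
Qed.

Lemma normal_ideal_top : normal_ideal (fun _ : A => True).
Proof. by split=> //; apply/predeqP => c; split=> // _ u; apply. Qed.

Lemma lbub_ideal_of W : is_open W -> upsetX W ->
  lower_bounds (upper_bounds (ideal_of W)) = ideal_of (cl2 W).
Proof.
move=> oW uW.
have ubP u : upper_bounds (ideal_of W) u <-> forall x, W x -> sset u x.
  split=> [Wu x /(open_upset_sset oW uW)[c xc cW]|Wu c cW].
    exact: sset_le (Wu c cW) xc.
  by apply/le_sset => x /cW; apply: Wu.
apply/predeqP => c; split=> [lbc x xc|Wc u /ubP Wu].
  apply: contrapT => /(closed_upset_sep (closed_up (closed_cl W)) (upset_up _))[u Wu xu].
  apply/xu/(sset_le _ xc)/lbc/ubP => y Wy.
  by apply: Wu; exists y; split=> //; apply: sub_cl.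
apply/le_sset => x /Wc[y [yW yx]]; apply: yx.
by apply: cl_closed (closed_sset u) _; apply: cl_sub yW.
Qed.

Lemma normal_ideal_ofP W : is_open W -> upsetX W ->
  normal_ideal (ideal_of W) <-> int1 (cl2 W) = W.
Proof.
move=> oW uW.
rewrite /normal_ideal lbub_ideal_of // -(ideal_of_int1 (cl2 W)).
split=> [[_ WW]|WW]; first exact: ideal_of_inj (open_int1 _) (upset_int1 _) oW uW (esym WW).
by split; [move=> c c' c'c cW x /(sset_le c'c)/cW|rewrite WW].
Qed.

End Annihilators.

Section Characterizations.
Variables (d : Order.disp_t) (A : tbDistrLatticeType d) (K : Type).
Hypothesis regK : regular_card K.

Let kclopen_cl : Prop :=
  forall U : pspace A -> Prop, kclopen_upset K U -> clopen (cl U) /\ upsetX (cl U).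

Lemma complete_kappa_frameP :
  (complete_lattice A /\ kappa_frame A K) <-> (extremally_order_disconnected A /\ kclopen_cl).
Proof.
by rewrite complete_lattice_eodP kappa_frame_kclopenP.
Qed.

Lemma kappa_complete_heytingP :
  (kappa_complete A K /\ heyting_lattice A) <-> (esakia_space A /\ kclopen_cl).
Proof.
split=> [[kcomplete heyting]|[/heyting_esakiaP heyting /kappa_frame_kclopenP kframe]].
  split; first exact/heyting_esakiaP.
  apply/kappa_frame_kclopenP => S /kcomplete[a Sa]; exists a.
  exact: join_distr_of_heyting.
by split=> // S /kframe[a [Sa _]]; exists a.
Qed.

Lemma rel_ann_BLkP : (forall a b : A, BLk K (rel_ann a b)) <->
  (forall U : pspace A -> Prop, clopen U -> BLkX K (complP (down U))).
Proof.
split=> [annBLk U cU|BLkX_ann a b].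
  apply/(BLk_ideal_ofP regK (closed_down (proj2 cU)) (upset_complP_down U)).
  by apply: ideal_of_clopen_ind cU => //; [apply: BLk_meet|apply: BLk_top].
rewrite rel_ann_ideal_of.
apply/(BLk_ideal_ofP regK (closed_down (closed_basic a b)) (upset_complP_down _)).
exact/BLkX_ann/clopen_basic.
Qed.

Lemma rel_ann_normal_BLkP :
  (forall a b : A, normal_ideal (rel_ann a b) /\ BLk K (rel_ann a b)) <->
  (forall U : pspace A -> Prop, clopen U ->
     DM_set (complP (down U)) /\ BLkX K (complP (down U))).
Proof.
split=> [annP U cU|DM_ann a b].
  have oW := closed_down (proj2 cU); have uW := upset_complP_down U.
  have [/(normal_ideal_ofP oW uW) WW /(BLk_ideal_ofP regK oW uW) ?] :
      normal_ideal (ideal_of (complP (down U))) /\ BLk K (ideal_of (complP (down U))).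
    apply: (ideal_of_clopen_ind (P := fun D => normal_ideal D /\ BLk K D)) cU => //.
    - by move=> D E [ND BD] [NE BE]; split; [apply: normal_ideal_meet|apply: BLk_meet].
    - by split; [apply: normal_ideal_top|apply: BLk_top].
  by split=> //; split.
have oW := closed_down (closed_basic a b); have uW := upset_complP_down (basic a b).
have [[_ [_ WW]] ?] := DM_ann _ (clopen_basic a b).
rewrite rel_ann_ideal_of (normal_ideal_ofP oW uW) (BLk_ideal_ofP regK oW uW).
by split.
Qed.

End Characterizations.

Theorem theorem5p21 (d : Order.disp_t) (A : tbDistrLatticeType d) (K : Type) :
  regular_card K ->
  (* (1) *)
  ((complete_lattice A /\ kappa_frame A K) <->
   (extremally_order_disconnected A /\
    forall U : pspace A -> Prop, kclopen_upset K U -> clopen (cl U) /\ upsetX (cl U))) /\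
  (* (2) *)
  ((kappa_complete A K /\ heyting_lattice A) <->
   (esakia_space A /\
    forall U : pspace A -> Prop, kclopen_upset K U -> clopen (cl U) /\ upsetX (cl U))) /\
  (* (3) *)
  ((forall a b : A, BLk K (rel_ann a b)) <->
   (forall U : pspace A -> Prop, clopen U -> BLkX K (complP (down U)))) /\
  (* (4) *)
  ((forall a b : A, normal_ideal (rel_ann a b) /\ BLk K (rel_ann a b)) <->
   (forall U : pspace A -> Prop, clopen U ->
      DM_set (complP (down U)) /\ BLkX K (complP (down U)))).
Proof.
move=> regK; split; first exact: complete_kappa_frameP.
split; first exact: kappa_complete_heytingP.
by split; [apply: rel_ann_BLkP|apply: rel_ann_normal_BLkP].
Qed.
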